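(* Let $\mathbb{K}$ be a field and let $P_1, P_2 \in \mathbb{K}[X]$ be irreducible. If there exists a ring isomorphism $f : \mathbb{K}[X]/(P_1) \to \mathbb{K}[X]/(P_2)$ stabilizing $\mathbb{K}$ such that $Q_f' \neq 0$, then the rings $\mathbb{K}[X]/(P_1^n)$ and $\mathbb{K}[X]/(P_2^n)$ are isomorphic for all $n \geq 1$.
   Context: A ring homomorphism $f : A \to B$ between $\mathbb{K}$-algebras stabilizes $\mathbb{K}$ if there is a field automorphism $\sigma_f$ of $\mathbb{K}$ with $f(a) = \sigma_f(a)$ for all $a \in \mathbb{K}$. For a ring isomorphism $f : \mathbb{K}[X]/(P_1) \to \mathbb{K}[X]/(P_2)$ stabilizing $\mathbb{K}$, $Q_f$ is the unique polynomial of degree $< \deg P_2$ such that $f$ sends the class of $X$ to the class of $Q_f$; $'$ denotes the formal derivative. *)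

From HB Require Import structures.
From mathcomp Require Import all_boot all_order all_algebra.
Set Implicit Arguments. Unset Strict Implicit. Unset Printing Implicit Defensive.
Import GRing.Theory.
Local Open Scope ring_scope.

(* K[X]/(P): the ideal (P) is generated by the monic associate of P
   (for P != 0); MathComp's qpoly construction quotients by a monic
   polynomial, so we quotient by (lead_coef P)^-1 *: P. *)
Definition monic_assoc (K : fieldType) (P : {poly K}) : {poly K} :=
  (lead_coef P)^-1 *: P.

Definition quot_ring (K : fieldType) (P : {poly K}) : Type :=
  {poly %/ monic_assoc P}.

Definition qconst (K : fieldType) (P : {poly K}) (a : K) : quot_ring P :=
  qpolyC (monic_assoc P) a.

Definition qX (K : fieldType) (P : {poly K}) : quot_ring P :=
  qpolyX (monic_assoc P).

Definition stabilizes_K (K : fieldType) (P1 P2 : {poly K})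
    (f : quot_ring P1 -> quot_ring P2) : Prop :=
  exists sigma : {rmorphism K -> K},
    bijective sigma /\ forall a : K, f (qconst P1 a) = qconst P2 (sigma a).

(* Q_f: the unique representative of degree < deg P2 of f (class of X) *)
Definition Q_f (K : fieldType) (P1 P2 : {poly K})
    (f : quot_ring P1 -> quot_ring P2) : {poly K} :=
  val (f (qX P1)).

From HB Require Import structures.
From mathcomp Require Import all_boot all_order all_algebra.
From mathcomp Require Import ring.
Import GRing.Theory.
Local Open Scope ring_scope.

(* Write h^s for h with the automorphism s applied to its coefficients. A
   ring isomorphism f : K[X]/(P1) -> K[X]/(P2) acting as s on K maps the class
   of h to that of h^s(Q), Q = Q_f, so P2 | h^s(Q) iff P1 | h. Any y = Q mod P2
   has the same property, and y -> h^s(y) induces a ring morphism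
   K[X]/(P1^n) -> K[X]/(P2^n). If P2 divides P1^s(y) exactly once, then
   P2^k | h^s(y) forces P1^k | h, so this morphism is injective, and it is onto
   by counting dimensions (deg P2 <= deg P1 since f is onto).
   Such a y exists: either y = Q, or y = Q + P2 by Taylor's formula, unless
   P2^2 | P1^s(Q) and P2 | (P1')^s(Q). The latter forces P1' = 0. Pick R with
   R^s(Q) = X mod P2; differentiating shows P1 | R' (here Q' <> 0 is used),
   while differentiating Q^(s^-1)(R) = X mod P1, which is legitimate as P1' = 0,
   gives P1 | Q^(s^-1)'(R) R' - 1, a contradiction. *)

Section PolyDvdp.
Context {K : fieldType}.
Implicit Types P p u v h A : {poly K}.

Lemma dvdp_comp_polyB P p u v : P %| u - v -> P %| (p \Po u) - (p \Po v).
Proof.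
move=> Puv; elim/poly_ind: p => [|p c IH].
  by rewrite !comp_poly0 subrr dvdp0.
rewrite !comp_poly_MXaddC.
have -> : (p \Po u) * u + c%:P - ((p \Po v) * v + c%:P) =
          ((p \Po u) - (p \Po v)) * u + (p \Po v) * (u - v) by ring.
by apply: dvdp_add; [apply: dvdp_mulr | apply: dvdp_mull].
Qed.

Lemma dvdp_taylor1 p u h :
  h ^+ 2 %| (p \Po (u + h)) - (p \Po u) - (p^`() \Po u) * h.
Proof.
elim/poly_ind: p => [|p c]; first by rewrite deriv0 !comp_poly0 mul0r !subrr.
case/dvdpP=> E pE; rewrite derivMXaddC !comp_poly_MXaddC comp_polyD comp_polyM.
have -> : p \Po (u + h) = (p \Po u) + (p^`() \Po u) * h + E * h ^+ 2.
  by rewrite -pE; ring.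
by apply/dvdpP; exists (E * (u + h) + (p^`() \Po u)); rewrite comp_polyX; ring.
Qed.

Lemma dvdp_deriv P A : P^`() = 0 -> P %| A -> P %| A^`().
Proof. by move=> dP /dvdpP [B ->]; rewrite derivM dP mulr0 addr0 dvdp_mull. Qed.

Lemma deriv_eq0_dvdp p : p %| p^`() -> p^`() = 0.
Proof.
have [-> | p0] := eqVneq p 0; first by rewrite deriv0.
apply: contraTeq => dp0; apply: contraTN (lt_size_deriv p0); rewrite -leqNgt.
exact: dvdp_leq.
Qed.

Lemma leq_size_exp p u n :
  p != 0 -> (size p <= size u)%N -> (size (p ^+ n) <= size (u ^+ n))%N.
Proof.
move=> p0 le_pu.
have u0 : u != 0 by rewrite -size_poly_gt0 (leq_trans _ le_pu) // size_poly_gt0.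
rewrite [size (p ^+ n)]polySpred ?expf_neq0 //.
rewrite [size (u ^+ n)]polySpred ?expf_neq0 //.
rewrite ltnS !size_exp leq_mul2r.
by rewrite -ltnS -!polySpred ?le_pu ?orbT.
Qed.

Lemma size_exp_gt1 p n : (1 < size p)%N -> (0 < n)%N -> (1 < size (p ^+ n))%N.
Proof.
move=> sp n_gt0; have p0 : p != 0 by rewrite -size_poly_gt0 ltnW.
by rewrite polySpred ?expf_neq0 // ltnS size_exp muln_gt0 -ltnS -polySpred ?sp.
Qed.

End PolyDvdp.

Notation qin P := (in_qpoly (monic_assoc P)).

Section QuotRing.
Context {K : fieldType}.
Implicit Types P h : {poly K}.

Lemma size_monic_assoc P : size (monic_assoc P) = size P.
Proof.
have [-> | P0] := eqVneq P 0; first by rewrite /monic_assoc scaler0.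
by rewrite size_scale // invr_eq0 lead_coef_eq0.
Qed.

Lemma monic_assoc_monic P : P != 0 -> monic_assoc P \is monic.
Proof. by move=> P0; rewrite monicE lead_coefZ mulVf // lead_coef_eq0. Qed.

Context {P : {poly K}}.
Hypothesis size_P : (1 < size P)%N.

Let P_neq0 : P != 0. Proof. by rewrite -size_poly_gt0 ltnW. Qed.

Lemma mk_monic_assoc : mk_monic (monic_assoc P) = monic_assoc P.
Proof. by rewrite /mk_monic size_monic_assoc size_P monic_assoc_monic. Qed.

Lemma val_qin h : val (qin P h) = h %% P.
Proof.
rewrite /= mk_monic_assoc -Pdiv.IdomainMonic.modpE ?monic_assoc_monic //.
by rewrite modpZr // invr_eq0 lead_coef_eq0.
Qed.

Lemma size_qval (a : quot_ring P) : (size (val a) < size P)%N.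
Proof.
move: (size_mk_monic a); move: (size _) => k.
by rewrite mk_monic_assoc size_monic_assoc.
Qed.

Lemma qin_val (a : quot_ring P) : qin P (val a) = a.
Proof. by apply: val_inj; rewrite val_qin modp_small ?size_qval. Qed.

Lemma qin_eq0 h : (qin P h == 0) = (P %| h).
Proof. by rewrite -(inj_eq val_inj) val_qin. Qed.

Lemma qval_dvdp_eq0 (a : quot_ring P) : P %| val a -> a = 0.
Proof.
move=> Pa; apply/val_inj/eqP; apply: contraTT Pa => a0.
by apply: contraTN (size_qval a); rewrite -leqNgt; apply: dvdp_leq.
Qed.

Lemma qconstE a : qconst P a = qin P a%:P.
Proof.
apply: val_inj; rewrite val_qin modp_small /qconst ?qpolyCE //.
exact: leq_ltn_trans (size_polyC_leq1 _) size_P.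
Qed.

Lemma dim_quot_ring : \dim {:quot_ring P} = (size P).-1.
Proof. by rewrite dim_polyn mk_monic_assoc size_monic_assoc. Qed.

End QuotRing.

Lemma inj_surj_bijective (A : choiceType) (B : eqType) (f : A -> B) :
  injective f -> (forall b, exists a, f a = b) -> bijective f.
Proof.
move=> f_inj f_surj.
have f_surjb b : exists a, f a == b by have [a <-] := f_surj b; exists a.
exists (fun b => xchoose (f_surjb b)) => [a|b].
  by apply: f_inj; apply/eqP/(xchooseP (f_surjb (f a))).
exact/eqP/(xchooseP (f_surjb b)).
Qed.

Section QuotRmorphism.
Context {K : fieldType} {phi : {rmorphism {poly K} -> {poly K}}} {A B : {poly K}}.
Hypotheses (size_A : (1 < size A)%N) (size_B : (1 < size B)%N).
Hypothesis B_phiA : B %| phi A.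

Definition quot_map (a : quot_ring A) : quot_ring B := qin B (phi (val a)).

Fact quot_map_is_zmod_morphism : zmod_morphism quot_map.
Proof. by move=> a b; rewrite /quot_map !raddfB. Qed.

Fact quot_map_is_monoid_morphism : monoid_morphism quot_map.
Proof.
split=> [|a b].
  have val1 : val (1 : quot_ring A) = 1 by apply: qpolyCE.
  by rewrite /quot_map val1 !rmorph1.
rewrite /quot_map -rmorphM; apply/eqP; rewrite -subr_eq0 -raddfB (qin_eq0 size_B).
have -> : val (a * b) = val (qin A (val a * val b)) by [].
rewrite val_qin // -rmorphM; set x := val a * val b.
have -> : x %% A = x + - (x %/ A) * A by rewrite {2}(divp_eq x A); ring.
by rewrite rmorphD addrAC subrr add0r rmorphM dvdp_mull.
Qed.

Lemma exists_quot_rmorphism :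
  exists g : {rmorphism quot_ring A -> quot_ring B}, g =1 quot_map.
Proof.
by exists (HB.pack_for {rmorphism quot_ring A -> quot_ring B} quot_map
  (GRing.isZmodMorphism.Build _ _ quot_map quot_map_is_zmod_morphism)
  (GRing.isMonoidMorphism.Build _ _ quot_map quot_map_is_monoid_morphism)).
Qed.

End QuotRmorphism.

Section CompQpoly.
Context {K : fieldType}.

Definition comp_qpoly (A B y : {poly K}) (v : quot_ring A) : quot_ring B :=
  qin B (val v \Po y).

Fact comp_qpoly_is_linear A B y : linear (comp_qpoly A B y).
Proof.
move=> a u v; rewrite /comp_qpoly.
have -> : val (a *: u + v) = a *: val u + val v by [].
by rewrite comp_polyD comp_polyZ in_qpolyD in_qpolyZ.
Qed.

HB.instance Definition _ A B y :=
  GRing.isSemilinear.Build K (quot_ring A) (quot_ring B) _ (comp_qpoly A B y)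
    (GRing.semilinear_linear (comp_qpoly_is_linear A B y)).

Context {A B y : {poly K}}.
Hypotheses (size_A : (1 < size A)%N) (size_B : (1 < size B)%N).

Lemma size_le_of_comp_qpoly_onto :
  (forall b, exists v, comp_qpoly A B y v = b) -> (size B <= size A)%N.
Proof.
move=> onto; set F := linfun (comp_qpoly A B y).
have limgF : limg F = fullv.
  apply/eqP; rewrite eqEsubv subvf /=; apply/subvP => b _.
  by have [v <-] := onto b; rewrite -(lfunE (comp_qpoly A B y)) memv_img ?memvf.
have := limg_ker_dim F fullv; rewrite limgF !dim_quot_ring // => dimF.
by rewrite -(prednK (ltnW size_B)) -(prednK (ltnW size_A)) ltnS -dimF leq_addl.
Qed.

Lemma comp_qpoly_onto :
  injective (comp_qpoly B B y) -> forall b, exists v, comp_qpoly B B y v = b.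
Proof.
move=> inj b; set F := linfun (comp_qpoly B B y).
have kerF : lker F == 0%VS by apply/lker0P => u v; rewrite !lfunE; apply: inj.
have : b \in limg F by rewrite lker0_limgf // memvf.
by case/memv_imgP => v _ ->; exists v; rewrite lfunE.
Qed.

End CompQpoly.

Section Twist.
Variables (K : fieldType) (s : {rmorphism K -> K}).

Definition twist (y : {poly K}) : {poly K} -> {poly K} := comp_poly y \o map_poly s.

HB.instance Definition _ y := GRing.RMorphism.on (twist y).

Lemma twistX y : twist y 'X = y.
Proof. by rewrite /twist /= map_polyX comp_polyX. Qed.

Lemma twist_comp y p q : twist y (p \Po q) = map_poly s p \Po twist y q.
Proof. by rewrite /twist /= map_comp_poly comp_polyA. Qed.

Lemma dvdp_twist_cong P y z h :
  P %| y - z -> (P %| twist y h) = (P %| twist z h).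
Proof.
move=> Pyz; rewrite -[twist y h](subrK (twist z h)) dvdp_addr //.
exact: dvdp_comp_polyB.
Qed.

Variable t : K -> K.
Hypothesis ts : cancel t s.

Lemma map_poly_invK : cancel (map_poly t) (map_poly s).
Proof. exact: map_polyK ts (rmorph0 s). Qed.

Lemma size_map_poly_inv p : size (map_poly t p) = size p.
Proof. by rewrite -[in RHS](map_poly_invK p) size_map_poly. Qed.

Lemma twist_map_poly_inv y p : twist y (map_poly t p) = p \Po y.
Proof. by rewrite /twist /= map_poly_invK. Qed.

End Twist.

Arguments twist {K} s y.
Arguments twistX {K s}.
Arguments twist_comp {K s}.
Arguments dvdp_twist_cong {K s P y z}.
Arguments map_poly_invK {K s t}.
Arguments size_map_poly_inv {K s t}.
Arguments twist_map_poly_inv {K s t}.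

Lemma dvdp_exp_rmorph (K : fieldType) (phi : {rmorphism {poly K} -> {poly K}})
    (P1 P2 : {poly K}) :
  irreducible_poly P2 -> (forall h, (P2 %| phi h) = (P1 %| h)) ->
  ~~ (P2 ^+ 2 %| phi P1) ->
  forall k h, P2 ^+ k %| phi h -> P1 ^+ k %| h.
Proof.
move=> P2_irr phi_ker simple; elim=> [|k IH] h.
  by move=> _; rewrite expr0 dvd1p.
have P2_neq0 : P2 != 0 by case: P2_irr => sP2 _; rewrite -size_poly_gt0 ltnW.
rewrite exprS => P2k_h.
have /dvdpP [h1 hE] : P1 %| h by rewrite -phi_ker (dvdp_trans _ P2k_h) ?dvdp_mulIl.
have /dvdpP [T TE] : P2 %| phi P1 by rewrite phi_ker dvdpp.
have nP2_T : ~~ (P2 %| T).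
  by apply: contra simple => P2_T; rewrite TE expr2 dvdp_mul ?dvdpp.
move: P2k_h; rewrite hE rmorphM TE mulrA [P2 * _]mulrC dvdp_mul2r //.
rewrite Gauss_dvdpl; last by rewrite coprimep_expl ?irreducible_poly_coprime.
by move/IH=> P1k_h1; rewrite exprSr dvdp_mul.
Qed.

Section SimpleTwistRoot.
Context {K : fieldType} {s : {rmorphism K -> K}} {t : K -> K}.
Context {P1 P2 Q R : {poly K}}.
Hypotheses (P1_irr : irreducible_poly P1) (P2_irr : irreducible_poly P2).
Hypothesis ts : cancel t s.
Hypothesis twistQ_ker : forall h, (P2 %| twist s Q h) = (P1 %| h).
Hypothesis twistQ_R : P2 %| twist s Q R - 'X.

Let P2_neq0 : P2 != 0.
Proof. by case: P2_irr => sP2 _; rewrite -size_poly_gt0 ltnW. Qed.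

Lemma dvdp_comp_twistQR p : P2 %| (p \Po twist s Q R) - p.
Proof. by rewrite -{2}[p]comp_polyXr dvdp_comp_polyB. Qed.

Lemma deriv_eq0_of_twist_deriv : P2 %| twist s Q P1^`() -> P1^`() = 0.
Proof. by rewrite twistQ_ker; apply: deriv_eq0_dvdp. Qed.

Lemma not_dvdp_derivR : P1^`() = 0 -> ~~ (P1 %| R^`()).
Proof.
move=> dP1; apply/negP => P1_dR.
have P1_QR : P1 %| (map_poly t Q \Po R) - 'X.
  rewrite -twistQ_ker rmorphB /= twist_comp (map_poly_invK ts) twistX.
  exact: dvdp_comp_twistQR.
have : P1 %| (map_poly t Q \Po R - 'X)^`() by exact: dvdp_deriv.
rewrite derivB deriv_comp derivX dvdp_subr ?dvdp_mull // dvdp1.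
by case: P1_irr => size_P1 _ /eqP P1_1; rewrite P1_1 in size_P1.
Qed.

Lemma dvdp_derivR : Q^`() != 0 -> (size Q < size P2)%N ->
  P2 ^+ 2 %| twist s Q P1 -> P1 %| R^`().
Proof.
move=> dQ size_Q P2sq_P1; set W := twist s Q R.
have [S WE] : exists S, W = 'X + S * P2.
  by exists ((W - 'X) %/ P2); rewrite divpK // addrC subrK.
have twist_P2R : twist s Q (map_poly t P2 \Po R) = P2 \Po W.
  by rewrite twist_comp (map_poly_invK ts).
have /dvdpP [U UE] : P1 %| map_poly t P2 \Po R.
  by rewrite -twistQ_ker twist_P2R -(dvdp_subl _ (dvdpp P2)) dvdp_comp_twistQR.
have P2sq_W : P2 ^+ 2 %| P2 \Po W by rewrite -twist_P2R UE rmorphM dvdp_mull.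
have P2_1S : P2 %| 1 + P2^`() * S.
  (* Taylor at X: P2(W) = P2 (1 + P2' S) mod P2^2. *)
  have := dvdp_taylor1 P2 'X (S * P2); rewrite !comp_polyXr -WE => T.
  have T2 : P2 ^+ 2 %| P2 \Po W - P2 - P2^`() * (S * P2).
    by apply: dvdp_trans T; rewrite exprMn dvdp_mull.
  have : P2 ^+ 2 %| P2 * (1 + P2^`() * S).
    have -> : P2 * (1 + P2^`() * S) =
              P2 \Po W - (P2 \Po W - P2 - P2^`() * (S * P2)) by ring.
    exact: dvdp_sub.
  by rewrite expr2 dvdp_mul2l.
have P2_nQ : ~~ (P2 %| Q^`()).
  have Q_neq0 : Q != 0 by apply: contraNneq dQ => ->; rewrite deriv0.
  apply/negP => /(dvdp_leq dQ); rewrite leqNgt.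
  by rewrite (ltn_trans (lt_size_deriv Q_neq0)).
have P2_dRQ : P2 %| twist s Q R^`() * Q^`().
  have dW : W^`() = twist s Q R^`() * Q^`() by rewrite deriv_comp deriv_map.
  by rewrite -dW WE derivD derivX derivM addrCA dvdp_addr ?dvdp_mull // mulrC.
by move: P2_dRQ; rewrite Gauss_dvdpl ?irreducible_poly_coprime // twistQ_ker.
Qed.

Lemma exists_simple_twist_root : Q^`() != 0 -> (size Q < size P2)%N ->
  exists y, P2 %| y - Q /\ ~~ (P2 ^+ 2 %| twist s y P1).
Proof.
move=> dQ size_Q.
have [P2sq_P1|] := boolP (P2 ^+ 2 %| twist s Q P1); last first.
  by exists Q; rewrite subrr dvdp0.
have [P2_dP1|nP2_dP1] := boolP (P2 %| twist s Q P1^`()).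
  have := not_dvdp_derivR (deriv_eq0_of_twist_deriv P2_dP1).
  by rewrite dvdp_derivR.
exists (Q + P2); split; first by rewrite addrAC subrr add0r dvdpp.
apply: contra nP2_dP1 => P2sq_y.
have : P2 ^+ 2 %| twist s (Q + P2) P1 - twist s Q P1 - twist s Q P1^`() * P2.
  by rewrite /twist /= -deriv_map; apply: dvdp_taylor1.
by rewrite dvdp_subr ?dvdp_sub // expr2 dvdp_mul2r.
Qed.

End SimpleTwistRoot.

Lemma twist_quot_bijective {K : fieldType} {s : {rmorphism K -> K}} {t : K -> K}
    {A B : {poly K}} (y : {poly K}) :
  cancel t s -> (1 < size B)%N -> (size B <= size A)%N ->
  (forall h, B %| twist s y h -> A %| h) -> B %| twist s y A ->
  exists g : {rmorphism quot_ring A -> quot_ring B}, bijective g.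
Proof.
move=> ts size_B le_BA twist_inj B_twistA.
have size_A := leq_trans size_B le_BA.
have [g gE] := exists_quot_rmorphism size_A size_B B_twistA.
have eq0_of_A_dvdp (p : {poly K}) : (size p < size B)%N -> A %| map_poly t p -> p = 0.
  move=> size_p; apply: contraTeq => p0.
  have tp0 : map_poly t p != 0.
    by rewrite -size_poly_eq0 (size_map_poly_inv ts) size_poly_eq0.
  apply/negP => /(dvdp_leq tp0); rewrite (size_map_poly_inv ts) leqNgt.
  by rewrite (leq_trans size_p le_BA).
exists g; apply: inj_surj_bijective.
  apply: raddf_inj => a; rewrite -[_ a]/(g a) gE => /eqP.
  rewrite qin_eq0 // => /twist_inj.
  exact: qval_dvdp_eq0.
(* g is only s-semilinear; its image contains that of the K-linear
   v |-> v(y) mod B, which is onto because it is injective. *)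
have comp_inj : injective (comp_qpoly B B y).
  apply: raddf_inj => v /eqP; rewrite qin_eq0 // -(twist_map_poly_inv ts).
  by move/twist_inj/(eq0_of_A_dvdp _ (size_qval size_B v)) => v0; apply: val_inj.
move=> b; have [v <-] := comp_qpoly_onto comp_inj b.
exists (qin A (map_poly t (val v))); rewrite gE /quot_map val_qin //.
rewrite modp_small /=; first by rewrite (twist_map_poly_inv ts).
by rewrite (size_map_poly_inv ts) (leq_trans (size_qval size_B v)).
Qed.

Section StabilizingIso.
Context {K : fieldType} {P1 P2 : {poly K}} {s : {rmorphism K -> K}}.
Context {f : {rmorphism quot_ring P1 -> quot_ring P2}}.
Hypotheses (size_P1 : (1 < size P1)%N) (size_P2 : (1 < size P2)%N).
Hypothesis f_const : forall a, f (qconst P1 a) = qconst P2 (s a).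

Lemma f_qin h : f (qin P1 h) = qin P2 (twist s (Q_f f) h).
Proof.
elim/poly_ind: h => [|p c IH]; first by rewrite !rmorph0.
rewrite !rmorphD !rmorphM /= IH twistX -!qconstE // f_const; congr (_ * _ + _).
  by rewrite /Q_f qin_val.
by rewrite qconstE // /twist /= map_polyC comp_polyC.
Qed.

Hypothesis f_bij : bijective f.

Lemma twist_Qf_ker h : (P2 %| twist s (Q_f f) h) = (P1 %| h).
Proof.
rewrite -(qin_eq0 size_P1) -(qin_eq0 size_P2) -f_qin.
by rewrite -(rmorph0 f) (inj_eq (bij_inj f_bij)).
Qed.

Lemma twist_Qf_onto b : exists h, P2 %| twist s (Q_f f) h - b.
Proof.
case: f_bij => finv _ finvK; exists (val (finv (qin P2 b))).
by rewrite -qin_eq0 // raddfB /= -f_qin qin_val // finvK subrr.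
Qed.

Lemma size_le_of_stabilizing_iso : (size P2 <= size P1)%N.
Proof.
apply: (size_le_of_comp_qpoly_onto (y := Q_f f)) => // b.
case: f_bij => finv _ finvK; exists (qin P1 (map_poly s (val (finv b)))).
rewrite /comp_qpoly val_qin // modp_small ?size_map_poly ?size_qval //.
by rewrite -[_ \Po _]/(twist s _ _) -f_qin qin_val // finvK.
Qed.

End StabilizingIso.

Theorem mainTheorem14 (K : fieldType) (P1 P2 : {poly K}) :
  irreducible_poly P1 -> irreducible_poly P2 ->
  (exists f : {rmorphism quot_ring P1 -> quot_ring P2},
      bijective f /\ stabilizes_K f /\ (Q_f f)^`() != 0) ->
  forall n : nat, (1 <= n)%N ->
    exists g : {rmorphism quot_ring (P1 ^+ n) -> quot_ring (P2 ^+ n)},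
      bijective g.
Proof.
move=> P1_irr P2_irr [f [f_bij [[s [[t _ ts] f_const]] dQ]]] n n_gt0.
have size_P1 : (1 < size P1)%N by case: P1_irr.
have size_P2 : (1 < size P2)%N by case: P2_irr.
have Qf_ker := twist_Qf_ker size_P1 size_P2 f_const f_bij.
have [R twistR] := twist_Qf_onto size_P1 size_P2 f_const f_bij 'X.
have [y [yQ y_simple]] := exists_simple_twist_root P1_irr P2_irr ts Qf_ker twistR
  dQ (size_qval size_P2 _).
have y_ker h : (P2 %| twist s y h) = (P1 %| h).
  by rewrite (dvdp_twist_cong h yQ).
apply: (twist_quot_bijective y ts) => [||h|].
- exact: size_exp_gt1.
- apply: leq_size_exp; last exact: size_le_of_stabilizing_iso f_const f_bij.
  by rewrite -size_poly_gt0 ltnW.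
- exact: dvdp_exp_rmorph P2_irr y_ker y_simple n h.
- by rewrite rmorphXn dvdp_exp2r // y_ker.
Qed.
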